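(* There is no $\alpha\ge1$ such that $(\overline{\chi_f})_\alpha\in\Delta(\mathcal{A},\le)$; that is, the fractional clique cover number $\overline{\chi_f}$ does not extend to an element of $\Delta(\mathcal{A},\le)$.
   Context: The fractional clique cover number is $\overline{\chi_f}(G)=\chi_f(\overline{G})$, the fractional chromatic number of the complement; it belongs to $\Delta(\mathcal{G},\le)$. Graphs are finite simple undirected; $x\simeq x'$ means equal or adjacent. Strong product $G\boxtimes H$: vertex set $V(G)\times V(H)$, $(g,h)\simeq(g',h')$ iff $g\simeq g'$ and $h\simeq h'$. $H\le G$ for graphs means there is a homomorphism from $\overline{H}$ to $\overline{G}$. $\Delta(\mathcal{G},\le)$ is the set of maps $f$ from graphs to $\mathbb{R}_{\ge0}$ with $f(\text{empty})=0$, $f(K_1)=1$, additive under disjoint union, multiplicative under $\boxtimes$, and monotone under $\le$. A noncommutative graph is a subspace $S\subseteq B(\mathcal{H})$ ($\mathcal{H}$ finite-dimensional) with $I\in S$, $S^*=S$. A cohomomorphism from $T\subseteq B(\mathcal{K})$ to $S\subseteq B(\mathcal{H})$ is a finite family of linear maps $E_i:\mathcal{K}\to\mathcal{H}$ with $\sum_iE_i^*E_i=I$ and $E_i^*SE_j\subseteq T$ for all $i,j$; $T\le S$ if one exists. $\widehat{G}=\operatorname{span}\{|x\rangle\langle x'|:x\simeq x'\}\subseteq B(\mathbb{C}^{V(G)})$, $\mathcal{C}_d=\mathbb{C}I\subseteq B(\mathbb{C}^d)$. $\mathcal{A}$ is the semiring (under $\oplus,\otimes$, up to unitary isomorphism)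 generated by all $\widehat{G}$ and $\mathcal{C}_d$; its elements have the form $\bigoplus_{d=1}^r\widehat{G_d}\otimes\mathcal{C}_d$. For $f\in\Delta(\mathcal{G},\le)$, $\alpha\ge1$, $f_\alpha(\bigoplus_{d}\widehat{G_d}\otimes\mathcal{C}_d)=\sum_d f(G_d)d^\alpha$. $\Delta(\mathcal{A},\le)$ is the set of $\le$-monotone semiring homomorphisms $\mathcal{A}\to\mathbb{R}_{\ge0}$. *)

From HB Require Import structures.
From mathcomp Require Import all_boot all_order all_algebra.
From mathcomp Require Import complex mxtens.
From mathcomp Require Import boolp classical_sets reals exp.

Set Implicit Arguments.
Unset Strict Implicit.
Unset Printing Implicit Defensive.

Import Order.TTheory GRing.Theory Num.Theory.
Local Open Scope ring_scope.

Record graph := Graph {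
  gn : nat;
  gadj : rel 'I_gn;
  gadj_sym : symmetric gadj;
  gadj_irr : irreflexive gadj }.
Arguments gadj : clear implicits.

Definition gsim (G : graph) (x y : 'I_(gn G)) : bool := (x == y) || gadj G x y.

Definition compl_adj (G : graph) : rel 'I_(gn G) :=
  fun x y => (x != y) && ~~ gadj G x y.

Lemma compl_adj_sym G : symmetric (@compl_adj G).
Proof. by move=> x y; rewrite /compl_adj eq_sym gadj_sym. Qed.

Lemma compl_adj_irr G : irreflexive (@compl_adj G).
Proof. by move=> x; rewrite /compl_adj eqxx. Qed.

Definition gcompl (G : graph) : graph :=
  Graph (@compl_adj_sym G) (@compl_adj_irr G).

Definition independent (G : graph) (I : {set 'I_(gn G)}) : bool :=
  [forall x in I, forall y in I, ~~ gadj G x y].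

Definition frac_colouring (R : realType) (G : graph)
    (w : {set 'I_(gn G)} -> R) : Prop :=
  [/\ (forall I, 0 <= w I),
      (forall I, ~~ independent I -> w I = 0)
    & (forall v : 'I_(gn G), 1 <= \sum_(I : {set 'I_(gn G)} | v \in I) w I)].

Definition chi_f (R : realType) (G : graph) : R :=
  inf [set \sum_(I : {set 'I_(gn G)}) w I | w in @frac_colouring R G].

Definition chi_f_bar (R : realType) (G : graph) : R := chi_f R (gcompl G).

(* A subspace of 'M_n is encoded (as in mxalgebra) by a matrix whose   *)
(* row space is spanned by the mxvec's of its elements.                *)

Record ncg (R : realType) := NCG {
  ndim : nat;
  nsp : 'M[R[i]]_(ndim * ndim) }.
Arguments NCG {R} ndim nsp.

Section NCG.
Variable R : realType.
Local Notation C := R[i].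

Definition in_sp n (S : 'M[C]_(n * n)) (X : 'M[C]_n) : bool :=
  (mxvec X <= S)%MS.

Definition adjmx m n (E : 'M[C]_(m, n)) : 'M[C]_(n, m) := (map_mx conjc E)^T.

Definition ncg0 : ncg R := NCG 0 0.

Definition hatG (G : graph) : ncg R :=
  NCG (gn G) (\sum_(x : 'I_(gn G)) \sum_(y : 'I_(gn G) | gsim x y)
                <<mxvec (delta_mx x y : 'M[C]_(gn G))>>)%MS.

Definition Cd (d : nat) : ncg R := NCG d <<mxvec (1%:M : 'M[C]_d)>>%MS.

Definition dsum (S T : ncg R) : ncg R :=
  NCG (ndim S + ndim T)
   (nsp S *m lin_mx (fun X : 'M[C]_(ndim S) =>
        block_mx X 0 0 (0 : 'M[C]_(ndim T)))
    + nsp T *m lin_mx (fun Y : 'M[C]_(ndim T) =>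
        block_mx (0 : 'M[C]_(ndim S)) 0 0 Y))%MS.

Definition tens (S T : ncg R) : ncg R :=
  NCG (ndim S * ndim T)
   (\sum_(i < ndim S * ndim S) \sum_(j < ndim T * ndim T)
      <<mxvec (vec_mx (row i (nsp S)) *t vec_mx (row j (nsp T)))>>)%MS.

Definition ncg_le (T S : ncg R) : Prop :=
  exists Es : seq 'M[C]_(ndim S, ndim T),
    \sum_(E <- Es) adjmx E *m E = 1%:M /\
    forall E E', E \in Es -> E' \in Es ->
      forall X : 'M[C]_(ndim S), in_sp (nsp S) X ->
        in_sp (nsp T) (adjmx E *m X *m E').

Definition ncg_iso (S T : ncg R) : Prop :=
  exists U : 'M[C]_(ndim S, ndim T),
    [/\ adjmx U *m U = 1%:M, U *m adjmx U = 1%:M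
      & (forall X : 'M[C]_(ndim S),
          in_sp (nsp S) X = in_sp (nsp T) (adjmx U *m X *m U))].

Inductive inA : ncg R -> Prop :=
  | inA_graph G : inA (hatG G)
  | inA_Cd d : (0 < d)%N -> inA (Cd d)
  | inA_dsum S T : inA S -> inA T -> inA (dsum S T)
  | inA_tens S T : inA S -> inA T -> inA (tens S T)
  | inA_iso S T : inA S -> ncg_iso S T -> inA T.

(* Delta(A, <=): <=-monotone semiring homomorphisms A -> R_{>=0}
   (functions on isomorphism classes, i.e. invariant under unitary iso) *)
Definition DeltaA (F : ncg R -> R) : Prop :=
  [/\ (forall S T, inA S -> inA T -> ncg_iso S T -> F S = F T),
      (forall S, inA S -> 0 <= F S),
      (F ncg0 = 0 /\ F (Cd 1) = 1),
      ((forall S T, inA S -> inA T -> F (dsum S T) = F S + F T) /\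
       (forall S T, inA S -> inA T -> F (tens S T) = F S * F T))
    & (forall S T, inA S -> inA T -> ncg_le S T -> F S <= F T)].

Fixpoint realize_from (k : nat) (Gs : seq graph) : ncg R :=
  match Gs with
  | [::] => ncg0
  | G :: Gs' => dsum (tens (hatG G) (Cd k)) (realize_from k.+1 Gs')
  end.

Definition realize (Gs : seq graph) : ncg R := realize_from 1 Gs.

Fixpoint f_alpha_from (f : graph -> R) (alpha : R) (k : nat) (Gs : seq graph)
  : R :=
  match Gs with
  | [::] => 0
  | G :: Gs' => f G * (k%:R `^ alpha) + f_alpha_from f alpha k.+1 Gs'
  end.

Definition f_alpha (f : graph -> R) (alpha : R) (Gs : seq graph) : R :=
  f_alpha_from f alpha 1 Gs.

End NCG.

(* Suppose F in Delta(A, <=) restricts to (chi_f_bar)_alpha.  Evaluating F on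
   hatG G (x) C_1 and on hatG K_1 (x) C_d gives F (hatG G) = chi_f_bar G and
   F (C_d) = d ^ alpha, so monotonicity yields chi_f_bar G <= d ^ alpha whenever
   hatG G <= C_d, in particular whenever G has an orthonormal representation in
   C^d in which non-adjacent vertices are orthogonal.  Take for G the +-1
   vectors of length 4p, p an odd prime, distinct vectors being adjacent unless
   orthogonal: the normalised vectors themselves are such a representation with
   d = 4p, while by Frankl-Wilson a clique of G has at most
   4 #{S : |S| < p} <= 4 * 4^(4p) / 3^(3p) elements, so
   chi_f_bar G >= 27^p / (4 * 16^p), which eventually exceeds (4p)^alpha. *)

From mathcomp Require Import all_boot all_order all_algebra.
From mathcomp Require Import complex mxtens.
From mathcomp Require Import boolp classical_sets reals exp.
From mathcomp Require Import ring zify.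
(* classical_sets shadows set0, setP, subsetP, ... of the finite-set library. *)
From mathcomp Require Import fintype finset.
Import Order.TTheory GRing.Theory Num.Theory.

Set Implicit Arguments.
Unset Strict Implicit.
Unset Printing Implicit Defensive.

Definition hamming n (b z : {set 'I_n}) : nat := #|(b :\: z) :|: (z :\: b)|.

Section MultilinearPolynomials.
Variables (K : fieldType) (n : nat).
Local Notation T := {set 'I_n}.
Local Open Scope ring_scope.

Definition monomial (S z : T) : K := (S \subset z)%:R.

(* Polynomials in the indicator coordinates of a subset, reduced with
   x_j ^ 2 = x_j, so that they are spanned by the [monomial S]. *)
Definition deg_le (k : nat) (f : T -> K) :=
  {c : T -> K | (forall S : T, (k < #|S|)%N -> c S = 0) /\
                forall z, f z = \sum_S c S * monomial S z}.

Lemma eq_deg_le k f g : f =1 g -> deg_le k f -> deg_le k g.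
Proof. by move=> fg [c [c0 cE]]; exists c; split=> // z; rewrite -fg. Qed.

Lemma deg_leW k k' f : (k <= k')%N -> deg_le k f -> deg_le k' f.
Proof.
move=> le [c [c0 fE]]; exists c; split=> // S lt; apply: c0.
exact: leq_ltn_trans lt.
Qed.

Lemma deg_le_const (a : K) : deg_le 0 (fun _ => a).
Proof.
exists (fun S => if S == set0 then a else 0); split.
  by move=> S; case: eqP => // ->; rewrite cards0.
move=> z; rewrite (bigD1 set0) //= eqxx big1 ?addr0.
  by rewrite /monomial sub0set mulr1.
by move=> S /negbTE ->; rewrite mul0r.
Qed.

Lemma deg_le_monomial (S : T) : deg_le #|S| (monomial S).
Proof.
exists (fun S' => (S' == S)%:R); split.
  by move=> S' lt; case: eqP lt => // ->; rewrite ltnn.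
move=> z; rewrite (bigD1 S) //= eqxx mul1r big1 ?addr0 //.
by move=> S' /negbTE ->; rewrite mul0r.
Qed.

Lemma deg_leZ k (a : K) f : deg_le k f -> deg_le k (fun z => a * f z).
Proof.
move=> [c [c0 fE]]; exists (fun S => a * c S); split.
  by move=> S lt; rewrite c0 // mulr0.
by move=> z; rewrite fE mulr_sumr; apply: eq_bigr => S _; rewrite mulrA.
Qed.

Lemma deg_leD k f g : deg_le k f -> deg_le k g -> deg_le k (fun z => f z + g z).
Proof.
move=> [c [c0 fE]] [d [d0 gE]]; exists (fun S => c S + d S); split.
  by move=> S lt; rewrite c0 // d0 // addr0.
by move=> z; rewrite fE gE -big_split; apply: eq_bigr => S _; rewrite mulrDl.
Qed.

Lemma deg_le_sum k (I : Type) (r : seq I) (g : I -> T -> K) :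
  (forall i, deg_le k (g i)) -> deg_le k (fun z => \sum_(i <- r) g i z).
Proof.
move=> dg; elim: r => [|i r IH].
  apply: eq_deg_le (deg_leW (leq0n k) (deg_le_const 0)) => z.
  by rewrite big_nil.
by apply: eq_deg_le (deg_leD (dg i) IH) => z; rewrite big_cons.
Qed.

Lemma deg_leM_monomial k f (S : T) : deg_le k f ->
  deg_le (k + #|S|) (fun z => f z * monomial S z).
Proof.
move=> [c [c0 fE]].
exists (fun S' => \sum_(U | (U :|: S) == S') c U); split.
  move=> S' lt; rewrite big1 // => U /eqP UE; apply: c0.
  rewrite -(ltn_add2r #|S|); apply: leq_trans lt _; rewrite -UE cardsU.
  exact: leq_subr.
move=> z; rewrite fE mulr_suml.
rewrite (partition_big (fun U => U :|: S) xpredT) //=.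
apply: eq_bigr => S' _; rewrite mulr_suml; apply: eq_bigr => U /eqP <-.
rewrite -mulrA; congr (_ * _); rewrite /monomial -natrM subUset.
by case: (U \subset z); case: (S \subset z).
Qed.

Lemma deg_leM k m f g : deg_le k f -> deg_le m g ->
  deg_le (k + m) (fun z => f z * g z).
Proof.
move=> df [d [d0 gE]].
apply: (@eq_deg_le _ (fun z => \sum_S d S * (f z * monomial S z))).
  by move=> z; rewrite gE mulr_sumr; apply: eq_bigr => S _; rewrite mulrCA.
apply: deg_le_sum => S; case: (leqP #|S| m) => Sm.
  by apply: deg_leZ; apply: deg_leW (deg_leM_monomial S df); rewrite leq_add2l.
rewrite d0 //; apply: eq_deg_le (deg_leW (leq0n _) (deg_le_const 0)) => z.
by rewrite mul0r.
Qed.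

Lemma natr_hamming (b z : T) : (hamming b z)%:R =
  \sum_(j : 'I_n) ((j \in b)%:R + (1 - 2 * (j \in b)%:R) * monomial [set j] z).
Proof.
rewrite /hamming -sum1_card big_mkcond natr_sum; apply: eq_bigr => j _.
rewrite /monomial sub1set !inE.
by case: (j \in b); case: (j \in z) => /=; ring.
Qed.

Lemma deg_le_hamming (b : T) (a : K) : deg_le 1 (fun z => (hamming b z)%:R + a).
Proof.
apply: deg_leD; last exact: deg_leW (leq0n _) (deg_le_const a).
apply: eq_deg_le (fun z => esym (natr_hamming b z)) _.
apply: deg_le_sum => j; apply: deg_leD.
  exact: deg_leW (leq0n _) (deg_le_const _).
by apply: deg_leZ; have := deg_le_monomial [set j]; rewrite cards1.
Qed.

End MultilinearPolynomials.

Section FranklWilson.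
Variables (n p : nat).
Hypothesis p_pr : prime p.
Local Notation T := {set 'I_n}.
Local Notation K := 'F_p.
Local Open Scope ring_scope.

Definition fw_poly (b z : T) : K :=
  \prod_(i <- iota 1 p.-1) ((hamming b z)%:R - i%:R).

Lemma deg_le_fw_poly (b : T) : deg_le p.-1 (fw_poly b).
Proof.
rewrite /fw_poly; have := size_iota 1 p.-1; move: (iota 1 p.-1) => r <-.
elim: r => [|i r IH].
  by apply: eq_deg_le (deg_le_const _ 1) => z; rewrite big_nil.
apply: eq_deg_le (deg_leM (deg_le_hamming b (- i%:R)) IH) => z.
by rewrite big_cons.
Qed.

Lemma fw_poly_self_neq0 (b : T) : fw_poly b b != 0.
Proof.
rewrite /fw_poly /hamming setDv setU0 cards0 prodf_seq_neq0.
apply/allP => i; rewrite mem_iota => /andP[i0 ip] /=.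
rewrite add0r oppr_eq0 -(dvdn_pcharf (pchar_Fp p_pr)).
have p0 := prime_gt0 p_pr.
apply/negP => /(dvdn_leq i0); rewrite leqNgt.
by rewrite add1n prednK // in ip; rewrite ip.
Qed.

Lemma fw_poly_eq0 (b z : T) : ~~ (p %| hamming b z)%N -> fw_poly b z = 0.
Proof.
move=> nd; apply/eqP; rewrite /fw_poly prodf_seq_eq0; apply/hasP.
have p0 := prime_gt0 p_pr.
exists (hamming b z %% p)%N.
  by rewrite mem_iota add1n prednK // ltn_mod p0 andbT lt0n.
by rewrite /= -{1}(Fp_nat_mod p_pr) subrr.
Qed.

Theorem frankl_wilson (J : {set T}) :
  (forall b b', b \in J -> b' \in J -> b != b' -> ~~ (p %| hamming b b')%N) ->
  (#|J| <= #|[set S : T | (#|S| < p)%N]|)%N.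
Proof.
move=> HJ; set A := [set S : T | (#|S| < p)%N].
pose jv (i : 'I_#|J|) : T := enum_val i.
pose sv (s : 'I_#|A|) : T := enum_val s.
pose c (b : T) := sval (deg_le_fw_poly b).
pose C : 'M[K]_(#|J|, #|A|) := \matrix_(i, s) c (jv i) (sv s).
pose Mon : 'M[K]_(#|A|, #|J|) := \matrix_(s, i) monomial K (sv s) (jv i).
(* Polynomial method: C *m Mon is the matrix of the values
   fw_poly (jv i) (jv i'), which is diagonal with non-zero diagonal. *)
have CM_diag : C *m Mon = diag_mx (\row_i fw_poly (jv i) (jv i)).
  apply/matrixP => i i'; rewrite !mxE.
  have [c0 cE] := svalP (deg_le_fw_poly (jv i)); rewrite -/(c _) in c0 cE.
  have -> : \sum_j C i j * Mon j i' = \sum_S c (jv i) S * monomial K S (jv i').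
    under eq_bigr => s _ do rewrite !mxE.
    rewrite -(big_enum_val (fun S => c (jv i) S * monomial K S (jv i'))).
    rewrite big_mkcond /=; apply: eq_bigr => S _.
    case: ifP => // /negbT; rewrite inE -leqNgt => pS.
    by rewrite c0 ?mul0r // prednK // prime_gt0.
  rewrite -cE; case: eqP => [<-|/eqP ne]; first by rewrite mulr1n.
  rewrite mulr0n fw_poly_eq0 //; apply: HJ; try exact: enum_valP.
  by apply: contra ne => /eqP /enum_val_inj ->.
have CM_unit : C *m Mon \in unitmx.
  rewrite CM_diag unitmxE det_diag unitfE; apply/prodf_neq0 => i _.
  by rewrite mxE; apply: fw_poly_self_neq0.
have := mxrankM_maxl C Mon; rewrite mxrank_unit //.
by move/leq_trans; apply; exact: rank_leq_col.
Qed.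

End FranklWilson.

Section HammingFamilies.
Local Open Scope nat_scope.

Lemma hamming_sym n (b z : {set 'I_n}) : hamming b z = hamming z b.
Proof. by rewrite /hamming setUC. Qed.

Lemma hamming_add_cardI n (b b' : {set 'I_n}) :
  hamming b b' + 2 * #|b :&: b'| = #|b| + #|b'|.
Proof.
rewrite /hamming cardsU.
have -> : (b :\: b') :&: (b' :\: b) = set0.
  by apply/setP => x; rewrite !inE; case: (x \in b); case: (x \in b').
rewrite cards0 subn0 !cardsD [b' :&: b]setIC.
have h1 : #|b :&: b'| <= #|b| by apply/subset_leq_card/subsetIl.
have h2 : #|b :&: b'| <= #|b'| by apply/subset_leq_card/subsetIr.
lia.
Qed.

Lemma hamming_gt0 n (b b' : {set 'I_n}) : b != b' -> 0 < hamming b b'.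
Proof.
move=> ne; rewrite lt0n; apply: contra ne => /eqP /cards0_eq E.
apply/eqP/setP => x; have := congr1 (fun A : {set 'I_n} => x \in A) E.
by rewrite !inE; case: (x \in b); case: (x \in b').
Qed.

Lemma hamming_le_pred n (j : 'I_n) (b b' : {set 'I_n}) :
  (j \in b) = (j \in b') -> hamming b b' <= n.-1.
Proof.
move=> e; rewrite -[n in n.-1]card_ord -(cardsC1 j); apply: subset_leq_card.
apply/subsetP => x; rewrite !inE; apply: contraTneq => ->.
by rewrite e; case: (j \in b').
Qed.

Lemma hamming_even n (b b' : {set 'I_n}) :
  odd #|b| = odd #|b'| -> ~~ odd (hamming b b').
Proof.
move=> e; have := congr1 odd (hamming_add_cardI b b').
by rewrite oddD oddD e addbb mul2n odd_double addbF => ->.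
Qed.

Lemma ndvdn_even_lt4 p d : odd p -> ~~ odd d -> 0 < d < 4 * p ->
  d != 2 * p -> ~~ (p %| d).
Proof.
move=> op ed /andP[d0 dn] d2; apply/negP => /dvdnP [m dE].
move: ed; rewrite dE oddM op andbT => em.
have := odd_double_half m; rewrite (negbTE em) add0n => mE.
move: dE; rewrite -mE; case: (m./2) => [|[|q]] dE; move: d0 d2 dn; rewrite dE;
  nia.
Qed.

(* Split the family according to the first coordinate and the parity of the
   size: inside each of the four classes all distances are even and below
   4p, so avoiding 2p means avoiding every multiple of p. *)
Lemma card_avoid_half_hamming p (F : {set {set 'I_(4 * p)}}) :
  prime p -> odd p ->
  (forall b b', b \in F -> b' \in F -> b != b' -> hamming b b' != 2 * p) ->
  #|F| <= 4 * #|[set S : {set 'I_(4 * p)} | #|S| < p]|.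
Proof.
move=> pp op HF.
have n0 : 0 < 4 * p by rewrite muln_gt0 (prime_gt0 pp).
pose j0 : 'I_(4 * p) := Ordinal n0.
pose cls (b : {set 'I_(4 * p)}) := (j0 \in b, odd #|b|).
rewrite -sum1_card (partition_big cls xpredT) //=.
set M := #|_|; have -> : 4 * M = \sum_(c : bool * bool) M.
  by rewrite sum_nat_const card_prod card_bool.
apply: leq_sum => c _; rewrite sum1_card.
have -> : #|[pred b | (b \in F) && (cls b == c)]| =
          #|[set b in F | cls b == c]|.
  by apply: eq_card => b; rewrite !inE.
apply: frankl_wilson => // b b'; rewrite !inE.
move=> /andP[bF /eqP bc] /andP[b'F /eqP b'c] ne.
have [e1 e2] : (j0 \in b) = (j0 \in b') /\ odd #|b| = odd #|b'|.
  by rewrite -b'c in bc; case: bc.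
apply: ndvdn_even_lt4 => //; last exact: HF.
- exact: hamming_even.
- by rewrite hamming_gt0 //= (leq_ltn_trans (hamming_le_pred e1)) // prednK.
Qed.

End HammingFamilies.

Section Counting.
Local Open Scope nat_scope.

Lemma sum_exp3_card_compl n : \sum_(S : {set 'I_n}) 3 ^ (n - #|S|) = 4 ^ n.
Proof.
have cS (S : {set 'I_n}) : #|S| < n.+1.
  by rewrite ltnS; have := max_card (mem S); rewrite card_ord.
rewrite (partition_big (fun S : {set 'I_n} => inord #|S| : 'I_n.+1) xpredT) //=.
rewrite -[4]/(3 + 1) expnDn; apply: eq_bigr => k _; rewrite exp1n muln1.
have -> : \sum_(S : {set 'I_n} | inord #|S| == k) 3 ^ (n - #|S|) =
          \sum_(S : {set 'I_n} | #|S| == k) 3 ^ (n - k).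
  apply: eq_big => [S|S /eqP <-]; last by rewrite inordK.
  by rewrite -val_eqE /= inordK.
have := card_draws 'I_n k; rewrite card_ord => <-.
by rewrite sum_nat_const cardsE.
Qed.

Lemma card_small_sets_le n p :
  #|[set S : {set 'I_n} | #|S| < p]| * 3 ^ (n - p) <= 4 ^ n.
Proof.
rewrite -sum_nat_const -sum_exp3_card_compl.
rewrite [X in _ <= X](bigID (mem [set S : {set 'I_n} | #|S| < p])) /=.
apply: leq_trans (leq_addr _ _); apply: leq_sum => S; rewrite inE => Sp.
by rewrite leq_pexp2l // leq_sub2l // ltnW.
Qed.

Lemma card_small_sets_gt0 n p : 0 < p -> 0 < #|[set S : {set 'I_n} | #|S| < p]|.
Proof. by move=> p0; apply/card_gt0P; exists set0; rewrite inE cards0. Qed.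

Lemma expn_le_bin_mul p m : m <= p -> p ^ m <= 'C(p, m) * m ^ m.
Proof.
move=> mp.
rewrite -(leq_pmul2r (fact_gt0 m)) -mulnA [m ^ m * _]mulnC mulnA bin_ffact.
have e1 : p ^ m = \prod_(i < m) p by rewrite prod_nat_const card_ord.
have e2 : m ^ m = \prod_(i < m) m by rewrite prod_nat_const card_ord.
rewrite -ffactnn !ffact_prod e1 e2 -!big_split /=.
by apply: leq_prod => i _; have := ltn_ord i; nia.
Qed.

(* 27^p = (16 + 11)^p >= C(p, N+1) 16^(p-N-1), which grows like
   p^(N+1) 16^p and so beats p^N 16^p. *)
Lemma exists_prime_exp_gap N :
  exists p, [/\ prime p, 2 < p & 4 * 16 ^ p * (4 * p) ^ N < 27 ^ p].
Proof.
set Q := 16 ^ N.+1 * N.+1 ^ N.+1.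
set c := 4 * 4 ^ N.
have [p Kp pp] := prime_above (c * Q + N + 3).
exists p; split => //; first by lia.
have Np : N.+1 <= p by lia.
have Np' : N.+1 < p.+1 by rewrite ltnS.
have binom27 : 'C(p, N.+1) * 16 ^ (p - N.+1) <= 27 ^ p.
  rewrite -[27]/(16 + 11) expnDn (bigD1 (Ordinal Np')) //=.
  by apply: leq_trans (leq_addr _ _); rewrite mulnA leq_pmulr // expn_gt0.
have binom_lb := expn_le_bin_mul Np.
have e16 : 16 ^ p = 16 ^ (p - N.+1) * 16 ^ N.+1 by rewrite -expnD subnK.
have poly16 : p ^ N.+1 * 16 ^ p <= 27 ^ p * Q.
  rewrite e16 /Q.
  move: binom27 binom_lb; set a := 'C(p, N.+1); set b := 16 ^ (p - N.+1).
  set d := 16 ^ N.+1; set e := N.+1 ^ N.+1 => binom27 binom_lb.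
  apply: leq_trans (leq_mul binom_lb (leqnn (b * d))) _.
  apply: leq_trans _ (leq_mul binom27 (leqnn (d * e))); lia.
rewrite expnMn expnS in poly16 *.
have X0 : 0 < 16 ^ p by rewrite expn_gt0.
have P0 : 0 < p ^ N by rewrite expn_gt0; lia.
move: poly16 Kp X0 P0; rewrite /c; set X := 16 ^ p; set P := p ^ N.
set Y := 27 ^ p; set F := 4 ^ N => poly16 Kp X0 P0.
nia.
Qed.

Lemma exists_prime_small_sets_gap N : exists p, [/\ prime p, odd p &
  4 * #|[set S : {set 'I_(4 * p)} | #|S| < p]| * (4 * p) ^ N < 2 ^ (4 * p)].
Proof.
have [p [pp p2 gap]] := exists_prime_exp_gap N.
exists p; split=> //.
  by case: (even_prime pp) => // p2E; rewrite p2E in p2.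
have small := card_small_sets_le (4 * p) p.
rewrite (_ : 4 * p - p = 3 * p) in small; last by lia.
move: small gap; rewrite expnM (expnM 4 4) (expnM 2 4) /=.
rewrite (_ : 256 ^ p = 16 ^ p * 16 ^ p); last by rewrite -expnMn.
set M := #|_|; set X := 16 ^ p; set Y := 27 ^ p; set Z := (4 * p) ^ N.
nia.
Qed.

End Counting.

Local Open Scope ring_scope.

Section FractionalChromaticNumber.
Variables (R : realType) (G : graph).

Lemma frac_colouring_singletons :
  frac_colouring (fun I : {set 'I_(gn G)} => (#|I| == 1%N)%:R : R).
Proof.
split=> [I|I nI|v]; first by rewrite ler0n.
  case: cards1P => // -[x Ix]; case/negP: nI; rewrite Ix.
  apply/forallP => y; apply/implyP; rewrite inE => /eqP ->.
  by apply/forallP => z; apply/implyP; rewrite inE => /eqP ->; rewrite gadj_irr.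
rewrite (bigD1 [set v]) ?inE ?eqxx //= cards1 eqxx lerDl.
by apply: sumr_ge0 => I _; rewrite ler0n.
Qed.

(* Double count the pairs (v, I) with v in I. *)
Lemma frac_colouring_weight_ge (a : nat) (w : {set 'I_(gn G)} -> R) :
  (0 < a)%N -> (forall I : {set 'I_(gn G)}, independent I -> (#|I| <= a)%N) ->
  frac_colouring w -> (gn G)%:R / a%:R <= \sum_I w I.
Proof.
move=> a0 Ha [w0 wi wc]; rewrite ler_pdivrMr ?ltr0n // mulrC.
have -> : (gn G)%:R = \sum_(v : 'I_(gn G)) (1 : R).
  by rewrite sumr_const card_ord.
apply: le_trans (ler_sum _ (fun v _ => wc v)) _.
rewrite (exchange_big_dep xpredT) //= mulr_sumr; apply: ler_sum => I _.
rewrite sumr_const; have [iI|niI] := boolP (independent I); last first.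
  by rewrite wi // mul0rn mulr0.
rewrite -[w I *+ _]mulr_natr mulrC; apply: ler_pM => //.
by rewrite ler_nat Ha.
Qed.

Lemma chi_f_ge_ratio (a : nat) : (0 < a)%N ->
  (forall I : {set 'I_(gn G)}, independent I -> (#|I| <= a)%N) ->
  (gn G)%:R / a%:R <= chi_f R G.
Proof.
move=> a0 Ha; apply: lb_le_inf.
  by eexists; eexists; first exact: frac_colouring_singletons.
by move=> _ [w wf <-]; apply: frac_colouring_weight_ge.
Qed.

End FractionalChromaticNumber.

Section OrthonormalRepresentation.
Variables (R : realType) (G : graph) (d : nat).
Variable u : 'I_(gn G) -> 'I_d -> R[i].
Hypothesis u_norm1 : forall x, \sum_j conjc (u x j) * u x j = 1.
Hypothesis u_orth : forall x y, ~~ gsim x y -> \sum_j conjc (u x j) * u y j = 0.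

(* E_x = |u_x><x|, so that E_x^* E_y = <u_x, u_y> |x><y|. *)
Definition orep_mx (x : 'I_(gn G)) : 'M[R[i]]_(d, gn G) :=
  \matrix_(j, k) (u x j *+ (k == x)).

Lemma adjmx_orep_mxM x y : adjmx (orep_mx x) *m orep_mx y =
  (\sum_j conjc (u x j) * u y j) *: delta_mx x y.
Proof.
apply/matrixP => k l; rewrite !mxE mulr_suml; apply: eq_bigr => j _.
rewrite !mxE rmorphMn /=.
by case: (k == x); case: (l == y); rewrite ?mulr0n ?mulr1n ?mulr0 ?mul0r ?mulr1.
Qed.

Lemma hatG_le_Cd : ncg_le (hatG R G) (Cd R d).
Proof.
exists [seq orep_mx x | x <- enum 'I_(gn G)]; split.
  rewrite big_map big_enum /= mx1_sum_delta; apply: eq_bigr => x _.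
  by rewrite adjmx_orep_mxM u_norm1 scale1r.
move=> E E' /mapP[x _ ->] /mapP[y _ ->] X.
rewrite /in_sp /= genmxE => /sub_rVP [a XE].
have -> : X = a *: 1%:M by rewrite -(mxvecK X) XE linearZ /= mxvecK.
rewrite -scalemxAr mulmx1 -scalemxAl adjmx_orep_mxM scalerA.
have [sxy|nsxy] := boolP (gsim x y); last first.
  by rewrite u_orth // mulr0 scale0r linear0 sub0mx.
rewrite linearZ /= scalemx_sub //.
by apply: (sumsmx_sup x) => //; apply: (sumsmx_sup y) => //; rewrite genmxE.
Qed.

End OrthonormalRepresentation.

Definition sign_vec (R : pzRingType) n (s : R) (b : {set 'I_n}) (j : 'I_n) :
    R :=
  if j \in b then - s else s.

Lemma sign_vec_dot (R : comPzRingType) n (s : R) (b b' : {set 'I_n}) :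
  \sum_j sign_vec s b j * sign_vec s b' j =
    s ^+ 2 * (n%:R - 2 * (hamming b b')%:R).
Proof.
have -> : (hamming b b')%:R =
    \sum_(j : 'I_n) ((j \in (b :\: b') :|: (b' :\: b)) : nat)%:R :> R.
  rewrite /hamming -sum1_card big_mkcond natr_sum.
  by apply: eq_bigr => j _; case: ifP.
rewrite -[n in n%:R]card_ord -sumr_const mulr_sumr -sumrB mulr_sumr.
apply: eq_bigr => j _; rewrite /sign_vec !inE.
by case: (j \in b); case: (j \in b') => /=; ring.
Qed.

Lemma card_set_ord n : #|{set 'I_n}| = (2 ^ n)%N.
Proof. by rewrite -cardsT -powersetT card_powerset cardsT card_ord. Qed.

Section HadamardGraph.
Variable p : nat.
Local Notation n := (4 * p)%N.

Definition had_set (x : 'I_#|{set 'I_n}|) : {set 'I_n} := enum_val x.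

(* Vertices are the +-1 vectors of length 4p, encoded by their sets of -1
   entries; distinct vectors are adjacent unless they are orthogonal, i.e. at
   Hamming distance 2p. *)
Definition had_adj : rel 'I_#|{set 'I_n}| :=
  fun x y => (x != y) && (hamming (had_set x) (had_set y) != (2 * p)%N).

Lemma had_adj_sym : symmetric had_adj.
Proof. by move=> x y; rewrite /had_adj eq_sym hamming_sym. Qed.

Lemma had_adj_irr : irreflexive had_adj.
Proof. by move=> x; rewrite /had_adj eqxx. Qed.

Definition hadamard_graph : graph := Graph had_adj_sym had_adj_irr.

Lemma hadamard_chi_f_bar_ge (R : realType) : prime p -> odd p ->
  (2 ^ n)%:R / (4 * #|[set S : {set 'I_n} | (#|S| < p)%N]|)%:R
    <= chi_f_bar R hadamard_graph.
Proof.
move=> pp op; rewrite -card_set_ord.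
apply: (@chi_f_ge_ratio R (gcompl hadamard_graph)).
  by rewrite muln_gt0 card_small_sets_gt0 // prime_gt0.
move=> I iI; rewrite -(card_imset I (@enum_val_inj _ _)).
apply: card_avoid_half_hamming => // b b' /imsetP[x xI ->] /imsetP[y yI ->] ne.
have xy : x != y by apply: contraNneq ne => ->.
have /forallP/(_ x)/implyP/(_ xI)/forallP/(_ y)/implyP/(_ yI) := iI.
by rewrite /= /compl_adj xy /= negbK => /andP[].
Qed.

Local Open Scope complex_scope.

Lemma hadamard_le_Cd (R : realType) : (0 < p)%N ->
  ncg_le (hatG R hadamard_graph) (Cd R n).
Proof.
move=> p0; set s : R := Num.sqrt (n%:R^-1).
have n0 : (n%:R : R) != 0 by rewrite pnatr_eq0 -lt0n muln_gt0.
have s2 : s ^+ 2 = n%:R^-1 by rewrite sqr_sqrtr // invr_ge0 ler0n.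
pose u x j := (sign_vec s (had_set x) j)%:C.
have u_dot x y : \sum_j conjc (u x j) * u y j =
    (s ^+ 2 * (n%:R - 2 * (hamming (had_set x) (had_set y))%:R))%:C.
  rewrite -sign_vec_dot rmorph_sum; apply: eq_bigr => j _.
  by rewrite conjc_real rmorphM.
apply: (@hatG_le_Cd R hadamard_graph n u) => [x|x y].
  by rewrite u_dot /hamming setDv setU0 cards0 mulr0 subr0 s2 mulVf.
rewrite /gsim negb_or => /andP[xy]; rewrite /= /had_adj xy /= negbK.
move=> /eqP dE; rewrite u_dot dE (_ : n = 2 * (2 * p))%N; last by rewrite mulnA.
by rewrite natrM subrr mulr0.
Qed.

End HadamardGraph.

Lemma hadamard_chi_f_bar_superpoly (R : realType) N :
  exists p, (0 < p)%N /\ ((4 * p) ^ N)%:R < chi_f_bar R (hadamard_graph p).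
Proof.
have [p [pp op gap]] := exists_prime_small_sets_gap N.
exists p; split; first exact: prime_gt0.
apply: lt_le_trans (hadamard_chi_f_bar_ge R pp op).
have M0 : (0 < 4 * #|[set S : {set 'I_(4 * p)} | (#|S| < p)%N]|)%N.
  by rewrite muln_gt0 card_small_sets_gt0 // prime_gt0.
by rewrite ltr_pdivlMr ?ltr0n // -natrM ltr_nat mulnC.
Qed.

Definition no_edge (m : nat) : rel 'I_m := fun _ _ => false.
Lemma no_edge_sym m : symmetric (@no_edge m). Proof. by []. Qed.
Lemma no_edge_irr m : irreflexive (@no_edge m). Proof. by []. Qed.
Definition edgeless (m : nat) : graph :=
  Graph (@no_edge_sym m) (@no_edge_irr m).

Lemma hatG_edgeless0 (R : realType) : hatG R (edgeless 0) = ncg0 R.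
Proof. by rewrite /hatG /ncg0; congr NCG; apply: flatmx0. Qed.

Lemma inA_hatG_Cd (R : realType) G k :
  (0 < k)%N -> inA (tens (hatG R G) (Cd R k)).
Proof. by move=> k0; apply: inA_tens; [exact: inA_graph | exact: inA_Cd]. Qed.

Lemma inA_realize_from (R : realType) k Gs :
  (0 < k)%N -> inA (realize_from R k Gs).
Proof.
elim: Gs k => [|G Gs IH] k k0 /=.
  by rewrite -hatG_edgeless0; exact: inA_graph.
by apply: inA_dsum; [exact: inA_hatG_Cd | exact: IH].
Qed.

Lemma chi_f_bar_edgeless1_ge1 (R : realType) : 1 <= chi_f_bar R (edgeless 1).
Proof.
have := @chi_f_ge_ratio R (gcompl (edgeless 1)) 1 isT.
rewrite /= divr1; apply => I _.
by have := max_card (mem I); rewrite card_ord.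
Qed.

(* The list [edgeless 0; ...; edgeless 0; edgeless 1] singles out the summand
   hatG K1 (x) C_(k + m) of realize_from. *)
Definition padded_K1 m := rcons (nseq m (edgeless 0)) (edgeless 1).

Section ExtensionToA.
Variables (R : realType) (alpha : R) (F : ncg R -> R).
Hypothesis F_Delta : DeltaA F.
Hypothesis F_realize :
  forall Gs, F (realize R Gs) = f_alpha (chi_f_bar R) alpha Gs.

Lemma F_realize_from_cons G Gs k : (0 < k)%N ->
  F (realize_from R k (G :: Gs)) =
    F (hatG R G) * F (Cd R k) + F (realize_from R k.+1 Gs).
Proof.
have [_ _ _ [Fadd Fmul] _] := F_Delta.
move=> k0; rewrite /= Fadd ?Fmul //.
- exact: inA_graph.
- exact: inA_Cd.
- exact: inA_hatG_Cd.
- exact: inA_realize_from.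
Qed.

Lemma F_hatG G : F (hatG R G) = chi_f_bar R G.
Proof.
have [_ _ [F0 F1] _ _] := F_Delta.
have := F_realize [:: G]; rewrite /realize /f_alpha F_realize_from_cons //=.
by rewrite F0 F1 mulr1 addr0 powR1 mulr1 addr0.
Qed.

Lemma chi_f_bar_edgeless0 : chi_f_bar R (edgeless 0) = 0.
Proof. by have [_ _ [F0 _] _ _] := F_Delta; rewrite -F_hatG hatG_edgeless0. Qed.

Lemma F_realize_padded_K1 m k : (0 < k)%N ->
  F (realize_from R k (padded_K1 m)) =
    chi_f_bar R (edgeless 1) * F (Cd R (k + m)).
Proof.
have [_ _ [F0 _] _ _] := F_Delta.
elim: m k => [|m IH] k k0; rewrite F_realize_from_cons // F_hatG.
  by rewrite F0 addn0 addr0.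
by rewrite chi_f_bar_edgeless0 mul0r add0r IH // addSnnS.
Qed.

Lemma f_alpha_padded_K1 m k :
  f_alpha_from (chi_f_bar R) alpha k (padded_K1 m) =
    chi_f_bar R (edgeless 1) * (k + m)%:R `^ alpha.
Proof.
elim: m k => [|m IH] k /=; first by rewrite addn0 addr0.
by rewrite chi_f_bar_edgeless0 mul0r add0r IH addSnnS.
Qed.

Lemma F_Cd d : (0 < d)%N -> F (Cd R d) = d%:R `^ alpha.
Proof.
move=> d0; have := F_realize (padded_K1 d.-1).
rewrite /realize /f_alpha F_realize_padded_K1 // f_alpha_padded_K1.
rewrite add1n prednK // => /mulfI; apply.
by rewrite gt_eqF // (lt_le_trans ltr01) // chi_f_bar_edgeless1_ge1.
Qed.

Lemma chi_f_bar_le_powR G d : (0 < d)%N ->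
  ncg_le (hatG R G) (Cd R d) -> chi_f_bar R G <= d%:R `^ alpha.
Proof.
have [_ _ _ _ Fmono] := F_Delta.
move=> d0 GCd; rewrite -F_hatG -F_Cd //.
by apply: Fmono GCd; [exact: inA_graph | exact: inA_Cd].
Qed.

End ExtensionToA.

Unset Implicit Arguments.
Theorem proposition3p6 (R : realType) (alpha : R) :
  1 <= alpha ->
  ~ exists F : ncg R -> R,
      DeltaA F /\
      forall Gs : seq graph, F (realize R Gs) = f_alpha (chi_f_bar R) alpha Gs.
Proof.
move=> alpha_ge1 [F [F_Delta F_realize]].
set N := Num.Def.archi_bound alpha.
have alpha_ltN : alpha < N%:R := archi_boundP (le_trans ler01 alpha_ge1).
have [p [p0 chi_big]] := hadamard_chi_f_bar_superpoly R N.
have n0 : (0 < 4 * p)%N by rewrite muln_gt0.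
have chi_small := chi_f_bar_le_powR F_Delta F_realize n0 (hadamard_le_Cd R p0).
have powR_le : (4 * p)%:R `^ alpha <= ((4 * p) ^ N)%:R :> R.
  by rewrite natrX -powR_mulrn // ler_powR ?ler1n ?ltW.
have := lt_le_trans chi_big (le_trans chi_small powR_le).
by rewrite ltxx.
Qed.
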